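(* Let $\Omega\subseteq\mathbb{R}^3$ be open and $R\in C^2(\Omega;SO(3))$ with $\operatorname{curl}R=\alpha$ for some constant matrix $\alpha\in\mathbb{R}^{3\times3}$. Then: (i) $\operatorname{div}R_i=\varepsilon_{ijk}\,\alpha_j\cdot R_k$ for $i\in\{1,2,3\}$; (ii) $\Delta R_i=\varepsilon_{ijk}\nabla(\alpha_j\cdot R_k)$ for $i\in\{1,2,3\}$; (iii) $|\nabla R|^2=-\mathrm{tr}(R^T\alpha R^T\alpha)$; (iv) $\mathrm{tr}(R^T\alpha R^T\alpha)=|(R^T\alpha)_{sym}|^2-|(R^T\alpha)_{skew}|^2$; (v) if $R(x_0)=Id$ for some $x_0\in\Omega$, then $|\operatorname{div}(R)(x_0)|^2=2|\alpha_{skew}|^2$; (vi) $\sum_{i=1}^3|(\nabla R_i)_{sym}|^2\ge\frac13|\operatorname{div}(R)|^2$; (vii) $\sum_{i=1}^3|(\nabla R_i)_{skew}|^2=\frac12|\alpha|^2$. All identities hold pointwise in $\Omega$.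
   Context: Einstein summation convention is used; $\varepsilon_{ijk}$ is the sign of the permutation $(ijk)$. For a matrix $A$, $A_i$ denotes its $i$-th row. $\operatorname{curl}$ of a matrix field is taken row-wise: $(\operatorname{curl}R)_{ij}=\varepsilon_{jkl}\partial_kR_{il}$, so $\alpha_j$ is the $j$-th row of $\alpha$. $\operatorname{div}R_i=\sum_l\partial_lR_{il}$ and $\operatorname{div}(R)$ is the vector $(\operatorname{div}R_1,\operatorname{div}R_2,\operatorname{div}R_3)$. $\nabla R_i$ is the $3\times3$ gradient matrix of the row $R_i$, and $|\nabla R|^2=\sum_{k,l,m}(\partial_mR_{kl})^2$. $A_{sym}=\frac12(A+A^T)$, $A_{skew}=\frac12(A-A^T)$, $|A|^2=A:A=\mathrm{tr}(A^TA)$. *)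

From HB Require Import structures.
From mathcomp Require Import all_boot all_order all_algebra.
From mathcomp Require Import all_classical all_reals all_analysis.
Set Implicit Arguments. Unset Strict Implicit. Unset Printing Implicit Defensive.
Import Order.TTheory GRing.Theory Num.Theory.
Import numFieldNormedType.Exports.
Local Open Scope classical_set_scope.
Local Open Scope ring_scope.

Section Defs.
Variable R : realType.

Definition pt := 'rV[R]_3.

Definition ek (k : 'I_3) : pt := delta_mx 0 k.

Definition pd (k : 'I_3) (f : pt -> R) (x : pt) : R := derive f x (ek k).

(* Levi-Civita symbol: sign of the permutation (i j k), 0 if not a permutation;
   = det of the matrix whose rows are e_i, e_j, e_k *)
Definition eps (i j k : 'I_3) : R :=
  \det (\matrix_(r < 3) (ek (nth i [:: i; j; k] r))).

Definition C2_on (O : set pt) (f : pt -> R) : Prop :=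
  forall x, O x ->
    {for x, continuous f} /\
    (forall k, derivable f x (ek k)) /\
    (forall k, {for x, continuous (pd k f)}) /\
    (forall k l, derivable (pd k f) x (ek l)) /\
    (forall k l, {for x, continuous (pd l (pd k f))}).

Definition C2_mx_on (O : set pt) (F : pt -> 'M[R]_3) : Prop :=
  forall i j, C2_on O (fun y => F y i j).

Definition SO3_valued (O : set pt) (F : pt -> 'M[R]_3) : Prop :=
  forall x, O x -> (F x)^T *m F x = 1%:M /\ \det (F x) = 1.

Definition curl (F : pt -> 'M[R]_3) (x : pt) : 'M[R]_3 :=
  \matrix_(i, j) \sum_(k < 3) \sum_(l < 3) eps j k l * pd k (fun y => F y i l) x.

Definition divrow (F : pt -> 'M[R]_3) (i : 'I_3) (x : pt) : R :=
  \sum_(l < 3) pd l (fun y => F y i l) x.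

Definition gradrow (F : pt -> 'M[R]_3) (i : 'I_3) (x : pt) : 'M[R]_3 :=
  \matrix_(l, m) pd m (fun y => F y i l) x.

Definition gradnorm2 (F : pt -> 'M[R]_3) (x : pt) : R :=
  \sum_(k < 3) \sum_(l < 3) \sum_(m < 3) (pd m (fun y => F y k l) x) ^+ 2.

Definition lap (f : pt -> R) (x : pt) : R := \sum_(m < 3) pd m (pd m f) x.

Definition rowdot (A B : 'M[R]_3) (j k : 'I_3) : R := \sum_(m < 3) A j m * B k m.

Definition sym_part (A : 'M[R]_3) : 'M[R]_3 := 2^-1 *: (A + A^T).
Definition skew_part (A : 'M[R]_3) : 'M[R]_3 := 2^-1 *: (A - A^T).
Definition fnorm2 (A : 'M[R]_3) : R := \tr (A^T *m A).

End Defs.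

Arguments eps {R}.
Arguments ek {R}.

From HB Require Import structures.
From mathcomp Require Import all_boot all_order all_algebra.
From mathcomp Require Import all_classical all_reals all_analysis.
From mathcomp Require Import ring lra.
Set Implicit Arguments. Unset Strict Implicit. Unset Printing Implicit Defensive.
Import Order.TTheory GRing.Theory Num.Theory.
Import numFieldNormedType.Exports.
Local Open Scope classical_set_scope.
Local Open Scope ring_scope.

(* Put c_s := sum_m R_sm (d_m R) R^T, the derivative of R along its s-th row
   read in the moving frame.  Differentiating R R^T = 1 makes every c_s skew, and
   since adj R = R^T the Levi-Civita symbol is invariant under R, so that
   curl c = alpha R^T.  For a field of skew matrices, sum_s (c_s)_is is the
   contraction of eps with its curl: this is (i).  The same contraction applied to
   sum_ijk eps_ijk c_i (curl c)^T yields tr ((alpha R^T)^2), which is (iii) once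
   |grad R|^2 = - R : Delta R is obtained by differentiating |R_i|^2 = 1 twice.
   As alpha is constant, d_m R_il - d_l R_im is constant, and Schwarz's theorem
   (derived from the mean value theorem along two directions) turns Delta R_i
   into grad div R_i, which is (ii).  Items (iv)-(vii) are pointwise algebra. *)

Section Schwarz.
Variables (R : realType) (V : normedModType R).
Implicit Types (f : V -> R) (u v x p : V).

Lemma nbhs_plane u v x (A : set V) : nbhs x A ->
  exists2 eta : R, 0 < eta & forall s t : R, `|s| < eta -> `|t| < eta ->
    A (s *: u + (t *: v + x)).
Proof.
move/nbhs_ballP => [d /= d0 dA].
set M := `|u| + `|v| + 1.
have M0 : 0 < M by rewrite ltr_pwDr // addr_ge0.
exists (d / M) => [|s t hs ht]; first by rewrite divr_gt0.
apply: dA; rewrite -ball_normE /ball_ /= addrA opprD addrCA subrr addr0 normrN.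
rewrite (le_lt_trans (ler_normD _ _)) // !normrZ.
apply: (@le_lt_trans _ _ (d / M * (`|u| + `|v|))).
  by rewrite mulrDr lerD // ler_wpM2r // ltW.
by rewrite -[ltRHS](@divfK _ M) ?gt_eqF // ltr_pM2l ?divr_gt0 // ltrDl.
Qed.

Let line_quotient f u p (s0 : R) :
  (fun h : R => h^-1 *: (((fun s : R => f (s *: u + p)) \o shift s0) (h *: 1)
                         - f (s0 *: u + p)))
  = (fun h : R => h^-1 *: ((f \o shift (s0 *: u + p)) (h *: u) - f (s0 *: u + p))).
Proof. by apply/funext => h /=; rewrite [h *: 1]mulr1 scalerDl addrA. Qed.

Lemma derivable_line f u p (s0 : R) :
  derivable (fun s : R => f (s *: u + p)) s0 1 = derivable f (s0 *: u + p) u.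
Proof. by rewrite /derivable line_quotient. Qed.

Lemma derive_line f u p (s0 : R) :
  'D_1 (fun s : R => f (s *: u + p)) s0 = 'D_u f (s0 *: u + p).
Proof. by rewrite /derive line_quotient. Qed.

Lemma MVT_line f u p (h : R) : 0 < h ->
  (forall s, 0 <= s <= h -> derivable f (s *: u + p) u) ->
  exists2 s, 0 <= s <= h & f (h *: u + p) - f p = 'D_u f (s *: u + p) * h.
Proof.
move=> h0 fd.
have line_d s : s \in `[0, h] -> derivable (fun s : R => f (s *: u + p)) s 1.
  by rewrite in_itv derivable_line => /fd.
have [||s] := @MVT_segment R (fun s => f (s *: u + p))
  (fun s => 'D_u f (s *: u + p)) 0 h (ltW h0).
- move=> s; rewrite in_itv /= => /andP[s0 sh].
  apply: DeriveDef; last exact: derive_line.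
  by apply: line_d; rewrite in_itv /= !ltW.
- exact: derivable_within_continuous.
- by rewrite in_itv /= scale0r add0r subr0 => sh ->; exists s.
Qed.

Lemma second_difference_MVT f u v x (h : R) : 0 < h ->
  (forall s t, 0 <= s <= h -> 0 <= t <= h ->
     derivable f (s *: u + (t *: v + x)) u /\
     derivable ('D_u f) (s *: u + (t *: v + x)) v) ->
  exists s t, [/\ 0 <= s <= h, 0 <= t <= h &
    f (h *: u + (h *: v + x)) - f (h *: u + x) - (f (h *: v + x) - f x) =
    h ^+ 2 * 'D_v ('D_u f) (s *: u + (t *: v + x))].
Proof.
move=> h0 fd.
have h_in : 0 <= h <= h by rewrite lexx ltW.
have zero_in : (0 : R) <= 0 <= h by rewrite lexx ltW.
pose g s := f (s *: u + (h *: v + x)) - f (s *: u + x).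
pose dg s := 'D_u f (s *: u + (h *: v + x)) - 'D_u f (s *: u + x).
have gd s : 0 <= s <= h -> derivable g s 1 /\ 'D_1 g s = dg s.
  move=> sh; have [fd_h _] := fd s h sh h_in; have [fd_0 _] := fd s 0 sh zero_in.
  rewrite scale0r add0r in fd_0.
  rewrite -derivable_line in fd_h; rewrite -derivable_line in fd_0.
  by split; [exact: derivableB fd_h fd_0 | rewrite (deriveB fd_h fd_0) !derive_line].
have [||s s_in g_MVT] := @MVT_segment R g dg 0 h (ltW h0).
- move=> s; rewrite in_itv /= => /andP[s0 sh].
  have /gd[? ?] : 0 <= s <= h by rewrite !ltW.
  exact: DeriveDef.
- apply: derivable_within_continuous => s; rewrite in_itv /=.
  by move=> /gd[].
move: s_in; rewrite in_itv /= => s_in.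
have [|t t_in dg_MVT] := @MVT_line ('D_u f) v (s *: u + x) h h0.
  by move=> t t_in; rewrite addrCA; exact: (fd s t s_in t_in).2.
exists s, t; split => //.
move: g_MVT dg_MVT; rewrite /g /dg !scale0r !add0r subr0 (addrCA (h *: v)) => ->.
by rewrite (addrCA (t *: v)) => ->; rewrite -mulrA -expr2 mulrC.
Qed.

Lemma derive_schwarz f u v x (A : set V) : nbhs x A ->
  (forall y, A y -> [/\ derivable f y u, derivable f y v,
     derivable ('D_u f) y v & derivable ('D_v f) y u]) ->
  {for x, continuous ('D_v ('D_u f))} -> {for x, continuous ('D_u ('D_v f))} ->
  'D_v ('D_u f) x = 'D_u ('D_v f) x.
Proof.
move=> xA fd c_uv c_vu.
apply/eqP; rewrite -subr_eq0 -normr_le0; apply/ler_addgt0Pr => e e0.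
have e2 : 0 < e / 2 by rewrite divr_gt0.
have near_uv := cvgr_dist_lt _ _ c_uv _ e2.
have near_vu := cvgr_dist_lt _ _ c_vu _ e2.
have [eta eta0 near_x] := nbhs_plane u v (filterI xA (filterI (near_uv _) (near_vu _))).
pose h := eta / 2.
have h0 : 0 < h by rewrite divr_gt0.
have small s : 0 <= s <= h -> `|s| < eta.
  move=> /andP[s0 sh]; rewrite ger0_norm // (le_lt_trans sh) //.
  by rewrite ltr_pdivrMr // ltr_pMr // ltr1n.
have [|s1 [t1 [s1_in t1_in uv_MVT]]] := @second_difference_MVT f u v x h h0.
  move=> s t s_in t_in.
  by have [/fd[fu _ fuv _] _] := near_x s t (small s s_in) (small t t_in); split.
have [|s2 [t2 [s2_in t2_in vu_MVT]]] := @second_difference_MVT f v u x h h0.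
  move=> s t s_in t_in; have [+ _] := near_x t s (small t t_in) (small s s_in).
  by rewrite (addrCA (t *: u)) => /fd[_ fv _ fvu]; split.
have [_ [close_uv _]] := near_x s1 t1 (small s1 s1_in) (small t1 t1_in).
have [_ [_ close_vu]] := near_x t2 s2 (small t2 t2_in) (small s2 s2_in).
rewrite /= (addrCA (t2 *: u)) in close_vu.
have same_point_value : 'D_v ('D_u f) (s1 *: u + (t1 *: v + x)) =
                        'D_u ('D_v f) (s2 *: v + (t2 *: u + x)).
  apply: (mulfI (_ : h ^+ 2 != 0)); first by rewrite expf_neq0 // gt_eqF.
  by rewrite -[LHS]uv_MVT -[RHS]vu_MVT (addrCA (h *: v)); ring.
rewrite add0r (splitr e).
apply: (le_trans (ler_distD ('D_v ('D_u f) (s1 *: u + (t1 *: v + x))) _ _)).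
apply: lerD; first exact: ltW close_uv.
by rewrite same_point_value distrC (ltW close_vu).
Qed.

End Schwarz.

Section Calculus.
Variables (R : realType) (V : normedModType R).
Implicit Types (f g : V -> R) (x v : V).

Lemma derive_eq_on_open (O : set V) f g x v : open O -> O x ->
  (forall y, O y -> f y = g y) -> 'D_v f x = 'D_v g x.
Proof.
move=> oO Ox fg; apply: near_eq_derive.
by apply: filterS fg _; apply: open_nbhs_nbhs.
Qed.

Lemma derivable_sumf n (h : 'I_n -> V -> R) x v :
  (forall i, derivable (h i) x v) -> derivable (fun y => \sum_(i < n) h i y) x v.
Proof. by move=> hd; rewrite -fct_sumE; exact: derivable_sum. Qed.

Lemma derive_sumf n (h : 'I_n -> V -> R) x v : (forall i, derivable (h i) x v) ->
  'D_v (fun y => \sum_(i < n) h i y) x = \sum_(i < n) 'D_v (h i) x.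
Proof. by move=> hd; rewrite -fct_sumE derive_sum. Qed.

Lemma derive_sum_mul n (a b : 'I_n -> V -> R) x v :
  (forall i, derivable (a i) x v) -> (forall i, derivable (b i) x v) ->
  'D_v (fun y => \sum_(i < n) a i y * b i y) x
  = \sum_(i < n) (a i x * 'D_v (b i) x + b i x * 'D_v (a i) x).
Proof.
move=> ad bd; rewrite derive_sumf => [|i]; last exact: derivableM.
by apply: eq_bigr => i _; exact: deriveM.
Qed.

Lemma derivable_sum_scale n (c : 'I_n -> R) (h : 'I_n -> V -> R) x v :
  (forall i, derivable (h i) x v) ->
  derivable (fun y => \sum_(i < n) c i * h i y) x v.
Proof. by move=> hd; apply: derivable_sumf => i; exact: derivableM. Qed.

Lemma derive_sum_scale n (c : 'I_n -> R) (h : 'I_n -> V -> R) x v :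
  (forall i, derivable (h i) x v) ->
  'D_v (fun y => \sum_(i < n) c i * h i y) x = \sum_(i < n) c i * 'D_v (h i) x.
Proof.
move=> hd; rewrite derive_sumf => [|i]; last exact: derivableM.
by apply: eq_bigr => i _; exact: deriveMl.
Qed.

Lemma derive_addr_cst f (k : R) x v : derivable f x v ->
  'D_v (fun y => f y + k) x = 'D_v f x.
Proof.
by move=> fd; rewrite (deriveD fd (derivable_cst k x v)) derive_cst addr0.
Qed.

End Calculus.

Definition o0 : 'I_3 := @Ordinal 3 0 isT.
Definition o1 : 'I_3 := @Ordinal 3 1 isT.
Definition o2 : 'I_3 := @Ordinal 3 2 isT.

Lemma ord3_cases (i : 'I_3) : [\/ i = o0, i = o1 | i = o2].
Proof.
by case: i => -[|[|[|//]]] ?; [constructor 1|constructor 2|constructor 3]; apply: val_inj.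
Qed.

Lemma sum3 (V : nmodType) (F : 'I_3 -> V) : \sum_(i < 3) F i = F o0 + F o1 + F o2.
Proof.
rewrite !big_ord_recl big_ord0 addr0 addrA.
by congr (F _ + F _ + F _); apply: val_inj.
Qed.

Lemma lift3E :
  ((lift o0 ord0 = o1) * (lift o0 ord_max = o2) * (lift o1 ord0 = o0) *
   (lift o1 ord_max = o2) * (lift o2 ord0 = o0) * (lift o2 ord_max = o1))%type.
Proof. by do !split; apply: val_inj. Qed.

Lemma det_mx22 (R : comRingType) (A : 'M[R]_2) :
  \det A = A ord0 ord0 * A ord_max ord_max - A ord0 ord_max * A ord_max ord0.
Proof.
rewrite (expand_det_row _ ord0) !big_ord_recl big_ord0 /cofactor !det_mx11 !mxE /=.
have -> : lift ord0 ord0 = ord_max :> 'I_2 by apply: val_inj.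
have -> : lift ord_max ord0 = ord0 :> 'I_2 by apply: val_inj.
by rewrite /bump /= expr0 expr1; ring.
Qed.

Lemma det_mx33 (R : comRingType) (A : 'M[R]_3) : \det A =
  A o0 o0 * (A o1 o1 * A o2 o2 - A o1 o2 * A o2 o1)
  - A o0 o1 * (A o1 o0 * A o2 o2 - A o1 o2 * A o2 o0)
  + A o0 o2 * (A o1 o0 * A o2 o1 - A o1 o1 * A o2 o0).
Proof.
rewrite (expand_det_row _ o0) sum3 /cofactor !det_mx22 !mxE /= !lift3E.
by rewrite !add0n expr0 expr1 expr2; ring.
Qed.

Section LeviCivita.
Variable R : realType.

Definition eps_tab (i j k : 'I_3) : R :=
  match nat_of_ord i, nat_of_ord j, nat_of_ord k with
  | 0, 1, 2 | 1, 2, 0 | 2, 0, 1 => 1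
  | 0, 2, 1 | 2, 1, 0 | 1, 0, 2 => -1
  | _, _, _ => 0
  end.

Lemma epsE i j k : eps i j k = eps_tab i j k.
Proof.
rewrite /eps det_mx33 !mxE /=.
by case: (ord3_cases i) => ->; case: (ord3_cases j) => ->; case: (ord3_cases k) => ->;
  rewrite /eps_tab /=; ring.
Qed.

End LeviCivita.

Section Rotation.
Variables (R : realType) (A : 'M[R]_3).
Hypotheses (A_orth : A^T *m A = 1%:M) (A_det : \det A = 1).

Lemma rotation_adj : \adj A = A^T.
Proof.
by rewrite -[\adj A]mulmx1 -(mulmx1C A_orth) mulmxA mul_adj_mx A_det mul1mx.
Qed.

(* In coordinates: A (e_m x e_n) = (A e_m) x (A e_n). *)
Lemma rotation_cross p m n :
  \sum_(q < 3) \sum_(s < 3) eps q p s * A s m * A q n = \sum_(b < 3) A p b * eps b m n.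
Proof.
have cofE b : A p b = cofactor A p b.
  by have := congr1 (fun M : 'M[R]_3 => M b p) rotation_adj; rewrite !mxE.
under [RHS]eq_bigr do rewrite cofE.
rewrite !sum3 /cofactor !det_mx22 !mxE !epsE.
by case: (ord3_cases p) => ->; case: (ord3_cases m) => ->; case: (ord3_cases n) => ->;
  rewrite /= !lift3E /eps_tab /= ?add0n ?expr0 ?expr1 ?expr2; ring.
Qed.

End Rotation.

Section Curl.
Variable R : realType.
Implicit Types (D c : 'I_3 -> 'M[R]_3).

(* [curl F x] with the partial derivatives of F at x replaced by arbitrary
   matrices [D k]; see [curlE]. *)
Definition mxcurl D : 'M[R]_3 :=
  \matrix_(i, j) \sum_(k < 3) \sum_(l < 3) eps j k l * D k i l.

Lemma mxcurl_antisym D i m l :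
  D m i l = D l i m + \sum_(j < 3) eps j m l * mxcurl D i j.
Proof.
rewrite sum3 !mxE !sum3 !epsE.
by case: (ord3_cases m) => ->; case: (ord3_cases l) => ->; rewrite /eps_tab /=; ring.
Qed.

Lemma sum_skew_mxcurl D :
  \sum_(i < 3) fnorm2 (skew_part (\matrix_(l, m) D m i l)) = 2^-1 * fnorm2 (mxcurl D).
Proof.
rewrite /fnorm2 /skew_part /mxtrace !sum3 !mxE !sum3 !mxE !sum3 !epsE /eps_tab /=.
by field; rewrite ?pnatr_eq0.
Qed.

Section SkewField.
Variable c : 'I_3 -> 'M[R]_3.
Hypothesis c_skew : forall s, (c s)^T = - c s.

Let c_antisym s j p : c s j p = - c s p j.
Proof. by have := congr1 (fun M : 'M[R]_3 => M p j) (c_skew s); rewrite !mxE. Qed.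

Let c_diag s j : c s j j = 0.
Proof. by have := c_antisym s j j; lra. Qed.

Lemma skew_div_mxcurl i :
  \sum_(s < 3) c s i s = \sum_(j < 3) \sum_(k < 3) eps i j k * mxcurl c j k.
Proof.
rewrite !sum3 !mxE !sum3 !epsE.
case: (ord3_cases i) => ->; rewrite /eps_tab /= !c_diag;
  rewrite !(c_antisym _ o1 o0) !(c_antisym _ o2 o0) !(c_antisym _ o2 o1); ring.
Qed.

Lemma skew_mxtrace_mxcurl :
  \sum_(i < 3) \sum_(j < 3) \sum_(k < 3) eps i j k * \sum_(p < 3) c i k p * mxcurl c j p
  = \tr (mxcurl c *m mxcurl c).
Proof.
rewrite /mxtrace !sum3 !mxE !sum3 !mxE !sum3 !epsE /eps_tab /= !c_diag.
by rewrite !(c_antisym _ o1 o0) !(c_antisym _ o2 o0) !(c_antisym _ o2 o1); ring.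
Qed.

End SkewField.
End Curl.

Section MatrixNorms.
Variable R : realType.
Implicit Types (A B : 'M[R]_3).

Lemma rowdotE A B j k : rowdot A B j k = (A *m B^T) j k.
Proof. by rewrite mxE; apply: eq_bigr => m _; rewrite mxE. Qed.

Lemma mxtrace_sqr B : \tr (B *m B) = fnorm2 (sym_part B) - fnorm2 (skew_part B).
Proof.
rewrite /fnorm2 /sym_part /skew_part /mxtrace !sum3 !mxE !sum3 !mxE.
by field; rewrite ?pnatr_eq0.
Qed.

Lemma sum_sqr_eps_rowdot1 A :
  \sum_(i < 3) (\sum_(j < 3) \sum_(k < 3) eps i j k * rowdot A 1%:M j k) ^+ 2
  = 2 * fnorm2 (skew_part A).
Proof.
rewrite /rowdot /fnorm2 /skew_part /mxtrace !sum3 !mxE !sum3 !mxE !epsE /eps_tab /=.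
by field; rewrite ?pnatr_eq0.
Qed.

Lemma mxtrace_sqr_le_sym B : 3^-1 * (\tr B) ^+ 2 <= fnorm2 (sym_part B).
Proof.
have -> : fnorm2 (sym_part B) = 3^-1 * (\tr B) ^+ 2 +
    (3^-1 * ((B o0 o0 - B o1 o1) ^+ 2 + (B o1 o1 - B o2 o2) ^+ 2 + (B o0 o0 - B o2 o2) ^+ 2)
     + 2^-1 * ((B o0 o1 + B o1 o0) ^+ 2 + (B o0 o2 + B o2 o0) ^+ 2
               + (B o1 o2 + B o2 o1) ^+ 2)).
  rewrite /fnorm2 /sym_part /mxtrace !sum3 !mxE !sum3 !mxE.
  by field; rewrite ?pnatr_eq0.
by rewrite lerDl addr_ge0 // mulr_ge0 ?invr_ge0 ?ler0n // !addr_ge0 // sqr_ge0.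
Qed.

End MatrixNorms.

Section RotatingFrame.
Variables (R : realType) (r : 'M[R]_3) (D : 'I_3 -> 'M[R]_3).
Hypotheses (r_orth : r^T *m r = 1%:M) (r_det : \det r = 1).
Hypothesis D_skew : forall m, D m *m r^T + r *m (D m)^T = 0.

Let frameD s := \sum_(m < 3) r s m *: (D m *m r^T).

Let frameD_skew s : (frameD s)^T = - frameD s.
Proof.
rewrite linear_sum -sumrN; apply: eq_bigr => m _.
rewrite linearZ /= trmx_mul trmxK -scalerN; congr (_ *: _).
by apply/eqP; rewrite -addr_eq0 addrC D_skew.
Qed.

Let mxcurl_frameD : mxcurl frameD = mxcurl D *m r^T.
Proof.
apply/matrixP => j p; rewrite !mxE.
transitivity (\sum_(m < 3) \sum_(n < 3)
    D m j n * \sum_(l < 3) \sum_(k < 3) eps l p k * r k m * r l n).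
  rewrite /frameD !sum3 !mxE !sum3 !mxE !epsE.
  by case: (ord3_cases p) => ->; rewrite /eps_tab /=; ring.
under eq_bigr => m _ do under eq_bigr => n _ do rewrite rotation_cross //.
rewrite !sum3 !mxE !sum3; ring.
Qed.

Let frameD_mulmx i : \sum_(l < 3) r i l *: D l = frameD i *m r.
Proof.
rewrite mulmx_suml; apply: eq_bigr => m _.
by rewrite -scalemxAl -mulmxA r_orth mulmx1.
Qed.

Let frameD_trace i : \sum_(s < 3) frameD s i s = \sum_(l < 3) D l i l.
Proof.
under eq_bigr => s _ do rewrite summxE.
rewrite exchange_big; apply: eq_bigr => m _.
rewrite -[in RHS](mulmx1 (D m)) -r_orth mulmxA [RHS]mxE.
by apply: eq_bigr => s _; rewrite !mxE mulrC.
Qed.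

Lemma rotation_div_mxcurl i :
  \sum_(l < 3) D l i l = \sum_(j < 3) \sum_(k < 3) eps i j k * rowdot (mxcurl D) r j k.
Proof.
rewrite -frameD_trace skew_div_mxcurl // mxcurl_frameD.
by apply: eq_bigr => j _; apply: eq_bigr => k _; rewrite rowdotE.
Qed.

Lemma rotation_mxtrace_mxcurl :
  \sum_(i < 3) \sum_(l < 3) r i l *
    (\sum_(j < 3) \sum_(k < 3) eps i j k * rowdot (mxcurl D) (D l) j k)
  = \tr (r^T *m mxcurl D *m r^T *m mxcurl D).
Proof.
set a := mxcurl D.
have frame_sum i :
    \sum_(l < 3) r i l * (\sum_(j < 3) \sum_(k < 3) eps i j k * rowdot a (D l) j k) =
    \sum_(j < 3) \sum_(k < 3) eps i j k * \sum_(p < 3) frameD i k p * mxcurl frameD j p.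
  transitivity (\sum_(j < 3) \sum_(k < 3) eps i j k *
                  rowdot a (\sum_(l < 3) r i l *: D l) j k).
    by rewrite /rowdot !sum3 !mxE; ring.
  apply: eq_bigr => j _; apply: eq_bigr => k _; congr (_ * _).
  rewrite frameD_mulmx rowdotE trmx_mul mulmxA -mxcurl_frameD mxE.
  by apply: eq_bigr => p _; rewrite [(frameD i)^T _ _]mxE mulrC.
under eq_bigr do rewrite frame_sum.
by rewrite skew_mxtrace_mxcurl // mxcurl_frameD -mulmxA mxtrace_mulC !mulmxA.
Qed.

End RotatingFrame.

Section PartialDerivatives.
Variable R : realType.
Implicit Types (f : pt R -> R) (F : pt R -> 'M[R]_3).

Lemma C2_pdC (O : set (pt R)) f x k l : open O -> O x -> C2_on O f ->
  pd l (pd k f) x = pd k (pd l f) x.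
Proof.
move=> oO Ox f_C2; apply: (derive_schwarz (A := O)); first exact: open_nbhs_nbhs.
- by move=> y /f_C2[_ [fd [_ [fdd _]]]]; split; [exact: fd|exact: fd|exact: fdd|exact: fdd].
- by have [_ [_ [_ [_ c]]]] := f_C2 x Ox; exact: c.
- by have [_ [_ [_ [_ c]]]] := f_C2 x Ox; exact: c.
Qed.

Definition pdmx (k : 'I_3) F (x : pt R) : 'M[R]_3 := \matrix_(i, l) pd k (fun y => F y i l) x.

Lemma curlE F x : curl F x = mxcurl (fun k => pdmx k F x).
Proof.
apply/matrixP => i j; rewrite !mxE.
by apply: eq_bigr => k _; apply: eq_bigr => l _; rewrite mxE.
Qed.

Lemma divrow_mxtrace F i x : divrow F i x = \tr (gradrow F i x).
Proof. by apply: eq_bigr => l _; rewrite mxE. Qed.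

End PartialDerivatives.

Section RotationField.
Variables (R : realType) (O : set (pt R)) (F : pt R -> 'M[R]_3) (alpha : 'M[R]_3).
Hypotheses (O_open : open O) (F_C2 : C2_mx_on O F) (F_SO3 : SO3_valued O F).
Hypothesis F_curl : forall x, O x -> curl F x = alpha.

Let F_derivable x i l m : O x -> derivable (fun y => F y i l) x (ek m).
Proof. by move=> /(F_C2 i l)[_ [d _]]. Qed.

Let pdF_derivable x i l m k : O x -> derivable (pd m (fun y => F y i l)) x (ek k).
Proof. by move=> /(F_C2 i l)[_ [_ [_ [d _]]]]. Qed.

Lemma pdmx_skew x m : O x -> pdmx m F x *m (F x)^T + F x *m (pdmx m F x)^T = 0.
Proof.
move=> Ox; apply/matrixP => k p; rewrite !mxE.
have rows_cst y : O y -> \sum_(q < 3) F y k q * F y p q = (k == p)%:R.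
  move=> /F_SO3[FtF _]; move/matrixP/(_ k p): (mulmx1C FtF); rewrite !mxE => <-.
  by apply: eq_bigr => q _; rewrite mxE.
have : pd m (fun y => \sum_(q < 3) F y k q * F y p q) x = 0.
  by rewrite /pd (derive_eq_on_open _ O_open Ox rows_cst) derive_cst.
rewrite /pd derive_sum_mul => [der0||]; [|by move=> q; apply: F_derivable..].
rewrite -[RHS]der0 -big_split; apply: eq_bigr => q _; rewrite !mxE addrC.
by congr (_ + _); rewrite mulrC.
Qed.

Lemma divrow_curl x i : O x ->
  divrow F i x = \sum_(j < 3) \sum_(k < 3) eps i j k * rowdot alpha (F x) j k.
Proof.
move=> Ox; have [FtF detF] := F_SO3 Ox.
rewrite -(F_curl Ox) curlE -(rotation_div_mxcurl FtF detF (fun m => pdmx_skew m Ox)).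
by apply: eq_bigr => l _; rewrite mxE.
Qed.

Let rowdot_derivable x l j k : O x -> derivable (fun y => rowdot alpha (F y) j k) x (ek l).
Proof. by move=> Ox; apply: derivable_sum_scale => n; apply: F_derivable. Qed.

Let pd_rowdot x l j k : O x ->
  pd l (fun y => rowdot alpha (F y) j k) x = rowdot alpha (pdmx l F x) j k.
Proof.
move=> Ox; rewrite /pd derive_sum_scale => [|n]; last by apply: F_derivable.
by apply: eq_bigr => n _; rewrite mxE.
Qed.

Lemma lap_curl x i l : O x -> lap (fun y => F y i l) x =
  \sum_(j < 3) \sum_(k < 3) eps i j k * pd l (fun y => rowdot alpha (F y) j k) x.
Proof.
move=> Ox.
have pd_swap m : pd m (pd m (fun y => F y i l)) x = pd l (pd m (fun y => F y i m)) x.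
  have curl_rel y : O y -> pd m (fun z => F z i l) y =
      pd l (fun z => F z i m) y + \sum_(j < 3) eps j m l * alpha i j.
    move=> Oy; rewrite -(F_curl Oy) curlE.
    by have := mxcurl_antisym (fun k => pdmx k F y) i m l; rewrite !mxE.
  rewrite {1}/pd (derive_eq_on_open _ O_open Ox curl_rel).
  rewrite derive_addr_cst; last by apply: pdF_derivable.
  exact: (C2_pdC _ _ O_open Ox (F_C2 i m)).
rewrite /lap; under eq_bigr do rewrite pd_swap.
transitivity (pd l (divrow F i) x).
  by rewrite /pd /divrow derive_sumf // => m; by apply: pdF_derivable.
rewrite /pd (derive_eq_on_open _ O_open Ox (fun y Oy => divrow_curl i Oy)).
rewrite derive_sumf => [|j]; last by apply: derivable_sum_scale => k; exact: rowdot_derivable.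
by apply: eq_bigr => j _; rewrite derive_sum_scale // => k; exact: rowdot_derivable.
Qed.

Lemma gradnorm2_lap x : O x ->
  gradnorm2 F x = - \sum_(i < 3) \sum_(l < 3) F x i l * lap (fun y => F y i l) x.
Proof.
move=> Ox.
have row_unit_pd i m y : O y -> \sum_(l < 3) F y i l * pd m (fun z => F z i l) y = 0.
  move=> Oy; have := congr1 (fun M : 'M[R]_3 => M i i) (pdmx_skew m Oy).
  by rewrite !mxE !sum3 !mxE; lra.
have sqr_pd i m : \sum_(l < 3) (pd m (fun y => F y i l) x) ^+ 2 =
    - \sum_(l < 3) F x i l * pd m (pd m (fun y => F y i l)) x.
  have : pd m (fun y => \sum_(l < 3) F y i l * pd m (fun z => F z i l) y) x = 0.
    by rewrite /pd (derive_eq_on_open _ O_open Ox (row_unit_pd i m)) derive_cst.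
  rewrite /pd derive_sum_mul => [d0|l|l]; [|by apply: F_derivable|by apply: pdF_derivable].
  apply/eqP; rewrite -subr_eq0 opprK -big_split /=; apply/eqP.
  by rewrite -[RHS]d0; apply: eq_bigr => l _; rewrite addrC expr2.
rewrite /gradnorm2 /lap -sumrN; apply: eq_bigr => i _.
rewrite exchange_big (eq_bigr _ (fun m _ => sqr_pd i m)) sumrN exchange_big.
by congr (- _); apply: eq_bigr => l _; rewrite mulr_sumr.
Qed.

Lemma gradnorm2_curl x : O x ->
  gradnorm2 F x = - \tr ((F x)^T *m alpha *m (F x)^T *m alpha).
Proof.
move=> Ox; have [FtF detF] := F_SO3 Ox.
rewrite gradnorm2_lap //; congr (- _).
under eq_bigr => i _ do under eq_bigr => l _ do rewrite lap_curl //.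
under eq_bigr => i _ do under eq_bigr => l _ do
  under eq_bigr => j _ do under eq_bigr => k _ do rewrite pd_rowdot //.
rewrite -(F_curl Ox) curlE.
exact: (rotation_mxtrace_mxcurl FtF detF (fun m => pdmx_skew m Ox)).
Qed.

Lemma sum_skew_gradrow x : O x ->
  \sum_(i < 3) fnorm2 (skew_part (gradrow F i x)) = 2^-1 * fnorm2 alpha.
Proof.
move=> Ox; rewrite -(F_curl Ox) curlE -sum_skew_mxcurl.
apply: eq_bigr => i _; congr (fnorm2 (skew_part _)).
by apply/matrixP => l m; rewrite !mxE.
Qed.

End RotationField.

Theorem proposition4p3 (R : realType) (O : set (pt R)) (F : pt R -> 'M[R]_3)
  (alpha : 'M[R]_3) :
  open O -> C2_mx_on O F -> SO3_valued O F ->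
  (forall x, O x -> curl F x = alpha) ->
  (* (i) *)
  (forall x, O x -> forall i : 'I_3,
     divrow F i x = \sum_(j < 3) \sum_(k < 3) eps i j k * rowdot alpha (F x) j k) /\
  (* (ii), componentwise: l-th component of Delta F_i *)
  (forall x, O x -> forall i l : 'I_3,
     lap (fun y => F y i l) x =
     \sum_(j < 3) \sum_(k < 3) eps i j k * pd l (fun y => rowdot alpha (F y) j k) x) /\
  (* (iii) *)
  (forall x, O x ->
     gradnorm2 F x = - \tr ((F x)^T *m alpha *m (F x)^T *m alpha)) /\
  (* (iv) *)
  (forall x, O x ->
     \tr ((F x)^T *m alpha *m (F x)^T *m alpha) =
     fnorm2 (sym_part ((F x)^T *m alpha)) - fnorm2 (skew_part ((F x)^T *m alpha))) /\
  (* (v) *)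
  (forall x0, O x0 -> F x0 = 1%:M ->
     \sum_(i < 3) (divrow F i x0) ^+ 2 = 2 * fnorm2 (skew_part alpha)) /\
  (* (vi) *)
  (forall x, O x ->
     \sum_(i < 3) fnorm2 (sym_part (gradrow F i x)) >=
     3^-1 * \sum_(i < 3) (divrow F i x) ^+ 2) /\
  (* (vii) *)
  (forall x, O x ->
     \sum_(i < 3) fnorm2 (skew_part (gradrow F i x)) = 2^-1 * fnorm2 alpha).
Proof.
move=> O_open F_C2 F_SO3 F_curl.
have div_curl := divrow_curl O_open F_C2 F_SO3 F_curl.
split; first by move=> x Ox i; exact: div_curl i Ox.
split; first by move=> x Ox i l; exact (lap_curl O_open F_C2 F_SO3 F_curl i l Ox).
split; first exact: gradnorm2_curl O_open F_C2 F_SO3 F_curl.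
split; first by move=> x _; rewrite -mulmxA mxtrace_sqr.
split.
  move=> x0 Ox0 F1; rewrite -sum_sqr_eps_rowdot1 -F1.
  by apply: eq_bigr => i _; rewrite div_curl.
split.
  move=> x _; rewrite mulr_sumr; apply: ler_sum => i _.
  by rewrite divrow_mxtrace mxtrace_sqr_le_sym.
exact: sum_skew_gradrow F_curl.
Qed.
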